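(* Let $h_1,h_2,\dots$ be real-valued i.i.d. random variables, let $(h_n^+)_n$ and $(h_n^-)_n$ be independent copies of $(h_n)_n$, and set $h_n^{sym}=h_n^+-h_n^-$. For a sequence $(k_n)$ of i.i.d. random variables (either $(h_n)$ or $(h_n^{sym})$) define, for $\varepsilon>0$, $N\in\mathbb N$: $d_N=\mathbb E(k_1\mathbf 1_{\{|k_1|\le N\}})$, $\pi_N(\varepsilon)=\mathbb P\big(\big|\frac1N\sum_{n=1}^Nk_n-d_N\big|>\varepsilon\big)$, $\tau_N(\varepsilon)=N\,\mathbb P(|k_1|>\varepsilon N)$, $\sigma_N(\varepsilon)=\frac1N\mathbb E(k_1^2\mathbf 1_{\{|k_1|\le\varepsilon N\}})$, $v_N(\varepsilon)=\frac1N\mathrm{Var}(k_1\mathbf 1_{\{|k_1|\le\varepsilon N\}})$; write these as $\pi_N,\tau_N,\sigma_N,v_N$ (with argument $\varepsilon$, and omitted argument meaning $\varepsilon=1$) for $(h_n)$ and as $\pi^{sym}_N,\tau^{sym}_N,\sigma^{sym}_N,v^{sym}_N$ for $(h^{sym}_n)$. Then for all sufficiently large $N\in\mathbb N$: $v_N\le2\,v^{sym}_{2N}=2\,\sigma^{sym}_{2N}$, $\tau_N\le4\,\tau^{sym}_N(1/2)$, and $\pi_N\ge\frac12\pi^{sym}_N(2)$. *)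

From HB Require Import structures.
From mathcomp Require Import all_boot all_order all_algebra.
From mathcomp Require Import all_classical all_reals all_analysis.
Set Implicit Arguments. Unset Strict Implicit. Unset Printing Implicit Defensive.
Import Order.TTheory GRing.Theory Num.Theory.
Local Open Scope classical_set_scope.
Local Open Scope ring_scope.

Section defs.
Context {d : measure_display} {T : measurableType d} {R : realType}.
Variable P : probability T R.

Definition mutually_independent {I : eqType} (X : I -> T -> R) : Prop :=
  forall (s : seq I) (B : I -> set R), uniq s ->
    (forall i, measurable (B i)) ->
    P (\big[setI/setT]_(i <- s) (X i @^-1` B i)) =
    (\prod_(i <- s) P (X i @^-1` B i))%E.

Definition same_law (X Y : T -> R) : Prop :=
  forall B : set R, measurable B -> P (X @^-1` B) = P (Y @^-1` B).

Definition iid {I : eqType} (X : I -> T -> R) : Prop :=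
  (forall i, measurable_fun setT (X i)) /\ mutually_independent X /\
  (forall i j, same_law (X i) (X j)).

Definition trunc (k : T -> R) (c : R) : T -> R :=
  fun w => if `|k w| <= c then k w else 0.

(* The quantities, for a sequence k (k 0 plays the role of k_1). *)
Definition d_N (k : nat -> T -> R) (N : nat) : R :=
  fine ('E_P[trunc (k 0%N) N%:R])%E.

Definition pi_N (k : nat -> T -> R) (N : nat) (eps : R) : \bar R :=
  P [set w | (eps < `| N%:R^-1 * (\sum_(n < N) k n w) - d_N k N |)%R].

Definition tau_N (k : nat -> T -> R) (N : nat) (eps : R) : \bar R :=
  (N%:R%:E * P [set w | (eps * N%:R < `|k 0%N w|)%R])%E.

Definition sigma_N (k : nat -> T -> R) (N : nat) (eps : R) : \bar R :=
  ((N%:R^-1)%:E *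
    'E_P[fun w => if (`|k 0%N w| <= eps * N%:R)%R then (k 0%N w ^+ 2)%R else 0%R])%E.

Definition v_N (k : nat -> T -> R) (N : nat) (eps : R) : \bar R :=
  ((N%:R^-1)%:E * 'V_P[trunc (k 0%N) (eps * N%:R)])%E.

End defs.

From HB Require Import structures.
From mathcomp Require Import all_boot all_order all_algebra.
From mathcomp Require Import all_classical all_reals all_analysis.
From mathcomp Require Import ring lra.
From mathcomp Require Import measurable_realfun.
Import Order.TTheory GRing.Theory Num.Theory numFieldNormedType.Exports.

(* Let X = h_1 and let U, V be the independent copies h^+_1, h^-_1. Write
   A_c = P(|X| <= c), B_c = E[X; |X| <= c], C_c = E[X^2; |X| <= c].
   U - V and V - U have the same law, so the truncated means of h^sym vanish:
   v^sym = sigma^sym and d^sym_N = 0.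
   Since |U - V| <= 2N on {|U| <= N, |V| <= N}, independence gives
   E[(U - V)^2; |U - V| <= 2N] >= 2 (A_N C_N - B_N^2), which dominates the
   variance C_N - B_N^2 as soon as B_N^2 <= (2 A_N - 1) C_N.  This holds for
   large N: if X is a.s. constant then A_N = 1 eventually; otherwise some
   Q_c(t) = E[(X - t)^2; |X| <= c] is bounded below by delta (1 + t^2), so the
   variance controls B_N^2 while 1 - A_N -> 0.
   For the tails, pick M with P(|V| <= M) >= 1/2: for N >= 2M the event
   {|U| > N, |V| <= M} lies in {|U - V| > N/2}.
   Finally the partial sums of (h^+_n) and (h^-_n) have the law of those of
   (h_n), and |S^sym_N / N| > 2 forces |S^+_N / N - d_N| > 1 or
   |S^-_N / N - d_N| > 1. *)

Local Open Scope classical_set_scope.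
Local Open Scope ring_scope.
Set Implicit Arguments. Unset Strict Implicit. Unset Printing Implicit Defensive.

(** * Bounded measurable functions and their means *)

Definition bounded_measurable {d} {T : measurableType d} {R : realType} (f : T -> R) :=
  measurable_fun setT f /\ exists M : R, forall x, `|f x| <= M.

Section bounded_measurable.
Context {d : measure_display} {T : measurableType d} {R : realType}.
Implicit Types f g : T -> R.

Lemma bounded_measurable_cst (c : R) : bounded_measurable (cst c : T -> R).
Proof. by split; [exact: measurable_cst | exists `|c|]. Qed.

Lemma bounded_measurableD f g :
  bounded_measurable f -> bounded_measurable g -> bounded_measurable (f \+ g).
Proof.
move=> [mf [M fM]] [mg [K gK]]; split; first exact: measurable_funD.
by exists (M + K) => x; apply: le_trans (ler_normD _ _) (lerD (fM x) (gK x)).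
Qed.

Lemma bounded_measurableN f : bounded_measurable f -> bounded_measurable (\- f).
Proof.
move=> [mf [M fM]]; split; first exact: measurableT_comp.
by exists M => x; rewrite normrN.
Qed.

Lemma bounded_measurableB f g :
  bounded_measurable f -> bounded_measurable g -> bounded_measurable (f \- g).
Proof. by move=> bf bg; exact: (bounded_measurableD bf (bounded_measurableN bg)). Qed.

Lemma bounded_measurableM f g :
  bounded_measurable f -> bounded_measurable g -> bounded_measurable (f \* g).
Proof.
move=> [mf [M fM]] [mg [K gK]]; split; first exact: measurable_funM.
by exists (M * K) => x; rewrite normrM ler_pM.
Qed.

Lemma bounded_measurableZ (c : R) f : bounded_measurable f -> bounded_measurable (c \*o f).
Proof. by move=> bf; exact: (bounded_measurableM (bounded_measurable_cst c) bf). Qed.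

Lemma bounded_measurable_indic (A : set T) : measurable A -> bounded_measurable (\1_A : T -> R).
Proof.
move=> mA; split; first exact: measurable_indic.
by exists 1 => x; rewrite indicE; case: (x \in A); rewrite ?normr1 ?normr0.
Qed.

Lemma bounded_measurable_comp {d'} {T' : measurableType d'} (g : T' -> R) (X : T -> T') :
  bounded_measurable g -> measurable_fun setT X -> bounded_measurable (g \o X).
Proof. by move=> [mg [M gM]] mX; split; [exact: measurableT_comp | exists M => x; exact: gM]. Qed.

Lemma bounded_measurable_integrable (mu : {measure set T -> \bar R}) f :
  (mu setT < +oo)%E -> bounded_measurable f -> mu.-integrable setT (EFin \o f).
Proof.
move=> muT [mf [M fM]]; apply: (measurable_bounded_integrable measurableT) => //.
exists M; split; first exact: num_real.
by move=> x Mx y _; apply: le_trans (fM y) (ltW Mx).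
Qed.

Lemma probability_setT_lty (P : probability T R) : (P setT < +oo)%E.
Proof. by rewrite probability_setT ltry. Qed.

Lemma bounded_measurable_integrable_prob (P : probability T R) f :
  bounded_measurable f -> P.-integrable setT (EFin \o f).
Proof. exact/bounded_measurable_integrable/probability_setT_lty. Qed.

Lemma bounded_measurable_integral_fin_num (P : probability T R) f :
  bounded_measurable f -> (\int[P]_x (f x)%:E)%E \is a fin_num.
Proof.
by move=> bf; apply: integrable_fin_num => //; exact: bounded_measurable_integrable_prob.
Qed.

End bounded_measurable.

Section mean.
Context {d : measure_display} {T : measurableType d} {R : realType}.
Variable P : probability T R.

Definition mean (f : T -> R) : R := fine 'E_P[f]%E.

Lemma meanE f : bounded_measurable f -> 'E_P[f]%E = (mean f)%:E.
Proof.
by move=> bf; rewrite /mean unlock fineK //; exact: bounded_measurable_integral_fin_num.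
Qed.

Lemma eq_mean f g : f =1 g -> mean f = mean g.
Proof. by move=> /funext ->. Qed.

Lemma mean_cst c : mean (cst c) = c.
Proof. by rewrite /mean expectation_cst. Qed.

Lemma mean_indic (A : set T) : measurable A -> mean (\1_A) = fine (P A).
Proof. by move=> mA; rewrite /mean expectation_indic. Qed.

Lemma meanD f g : bounded_measurable f -> bounded_measurable g ->
  mean (f \+ g) = mean f + mean g.
Proof.
move=> bf bg; apply: EFin_inj; rewrite EFinD -!meanE //; last exact: bounded_measurableD.
rewrite unlock -integralD //; exact: bounded_measurable_integrable_prob.
Qed.

Lemma meanZ c f : bounded_measurable f -> mean (c \*o f) = c * mean f.
Proof.
move=> bf; apply: EFin_inj; rewrite EFinM -!meanE //; last exact: bounded_measurableZ.
rewrite unlock -integralZl //; exact: bounded_measurable_integrable_prob.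
Qed.

Lemma meanN f : bounded_measurable f -> mean (\- f) = - mean f.
Proof.
move=> bf; rewrite -mulN1r -meanZ //; apply: eq_mean => x /=; by rewrite mulN1r.
Qed.

Lemma meanB f g : bounded_measurable f -> bounded_measurable g ->
  mean (f \- g) = mean f - mean g.
Proof. by move=> bf bg; rewrite meanD ?meanN //; exact: bounded_measurableN. Qed.

Lemma ler_mean f g : bounded_measurable f -> bounded_measurable g ->
  (forall x, f x <= g x) -> mean f <= mean g.
Proof.
move=> bf bg fg; rewrite -lee_fin -!meanE // unlock.
apply: le_integral => //; try exact: bounded_measurable_integrable_prob.
by move=> x _; rewrite lee_fin.
Qed.

Lemma mean_ge0 f : bounded_measurable f -> (forall x, 0 <= f x) -> 0 <= mean f.
Proof.
by move=> bf f0; rewrite -(mean_cst 0); apply: ler_mean => //; exact: bounded_measurable_cst.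
Qed.

Lemma variance_mean f : bounded_measurable f ->
  'V_P[f]%E = (mean (fun x => f x ^+ 2) - mean f ^+ 2)%:E.
Proof.
move=> bf; rewrite /variance unlock -/(mean f).
have bf2 : bounded_measurable (fun x => f x ^+ 2) by exact: bounded_measurableM.
have -> : (f \- cst (mean f)) * (f \- cst (mean f)) =
    (fun x => f x ^+ 2) \+ (- (2 * mean f)) \*o f \+ cst (mean f ^+ 2).
  by apply/funext => x; rewrite !fctE /=; ring.
have bZ := bounded_measurableZ (- (2 * mean f)) bf.
rewrite meanE; last by do 2?apply: bounded_measurableD => //; exact: bounded_measurable_cst.
rewrite !meanD //; [|exact: bounded_measurableD|exact: bounded_measurable_cst].
by rewrite meanZ // mean_cst; congr EFin; ring.
Qed.

End mean.

(** * Laws of pairs of random variables *)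

Section image_measure.
Local Open Scope ereal_scope.
Context {d1 d2 : measure_display} {T1 : measurableType d1} {T2 : measurableType d2}.
Context {R : realType}.
Variables (m : {measure set T1 -> \bar R}) (f : T1 -> T2).
Variable mf : measurable_fun setT f.

(* The measurability proof is an argument so that the measure instance below
   is found by unification. *)
Definition image_measure of measurable_fun setT f := pushforward m f.

Let image_measure0 : image_measure mf set0 = 0.
Proof. exact: measure0. Qed.

Let image_measure_ge0 A : 0 <= image_measure mf A.
Proof. exact: measure_ge0. Qed.

Let image_measure_sigma_additive : semi_sigma_additive (image_measure mf).
Proof. exact: measure_semi_sigma_additive. Qed.

HB.instance Definition _ := isMeasure.Build _ _ _ (image_measure mf)
  image_measure0 image_measure_ge0 image_measure_sigma_additive.

End image_measure.

Section pair_laws.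
Context {d : measure_display} {T : measurableType d} {R : realType}.
Local Open Scope ereal_scope.

Lemma pair_preimage_measure_unique (m1 m2 : {measure set T -> \bar R})
    (U1 V1 U2 V2 : T -> R) :
  measurable_fun setT U1 -> measurable_fun setT V1 ->
  measurable_fun setT U2 -> measurable_fun setT V2 -> m1 setT < +oo ->
  (forall A B, measurable A -> measurable B ->
    m1 (U1 @^-1` A `&` V1 @^-1` B) = m2 (U2 @^-1` A `&` V2 @^-1` B)) ->
  forall E, measurable E ->
    m1 ((fun w => (U1 w, V1 w)) @^-1` E) = m2 ((fun w => (U2 w, V2 w)) @^-1` E).
Proof.
move=> mU1 mV1 mU2 mV2 m1oo m12 E mE.
pose G := [set A `*` B | A in @measurable _ R & B in @measurable _ R].
have setIG : setI_closed G.
  move=> _ _ [A mA [B mB <-]] [A' mA' [B' mB' <-]]; rewrite -setXI.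
  by exists (A `&` A'); [exact: measurableI|exists (B `&` B') => //; exact: measurableI].
have GT : G setT by exists setT => //; exists setT; rewrite ?setXTT.
apply: (@measure_unique _ R _ G (fun=> setT) (measurable_prod_measurableType _ _)
  setIG (fun=> GT) (bigcup_const _ (ex_intro _ 0%N I))
  (image_measure m1 (measurable_fun_pair mU1 mV1))
  (image_measure m2 (measurable_fun_pair mU2 mV2)) _ (fun=> m1oo) _ mE).
by move=> _ [A mA [B mB <-]]; exact: m12.
Qed.

End pair_laws.

Section laws.
Context {d : measure_display} {T : measurableType d} {R : realType}.
Variable P : probability T R.
Local Open Scope ereal_scope.

Definition indep_pair (U V : T -> R) := forall A B, measurable A -> measurable B ->
  P (U @^-1` A `&` V @^-1` B) = P (U @^-1` A) * P (V @^-1` B).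

Lemma indep_pairC U V : indep_pair U V -> indep_pair V U.
Proof. by move=> UV A B mA mB; rewrite setIC UV // muleC. Qed.

Definition law (X : T -> R) (mX : measurable_fun setT X) : probability R R :=
  distribution P (mfun_Sub (mem_set mX)).

Lemma pair_law_indep (U V : T -> R) (mU : measurable_fun setT U)
    (mV : measurable_fun setT V) :
  indep_pair U V -> forall E, measurable E ->
    P ((fun w => (U w, V w)) @^-1` E) = (law mU \x law mV) E.
Proof.
move=> UV E mE; symmetry.
by apply: (product_measure_unique (m' := image_measure P (measurable_fun_pair mU mV))).
Qed.

Lemma mean_comp_law (X : T -> R) (mX : measurable_fun setT X) (g : R -> R) :
  bounded_measurable g -> mean P (g \o X) = fine (\int[law mX]_x (g x)%:E).
Proof.
move=> bg; rewrite /mean unlock; congr fine; symmetry.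
apply: (integral_distribution (X := mfun_Sub (mem_set mX)) (f := EFin \o g)).
  by case: bg => mg _; exact/measurable_EFinP.
exact: (bounded_measurable_integrable_prob P (bounded_measurable_comp bg mX)).
Qed.

Lemma mean_comp_same_law (X Y : T -> R) (g : R -> R) :
  measurable_fun setT X -> measurable_fun setT Y -> same_law P X Y ->
  bounded_measurable g -> mean P (g \o X) = mean P (g \o Y).
Proof.
move=> mX mY XY bg; rewrite (mean_comp_law mX bg) (mean_comp_law mY bg).
by congr fine; apply: eq_measure_integral => A mA _; exact: XY.
Qed.

Lemma integral_prod_mul (mu nu : probability R R) (f g : R -> R) :
  bounded_measurable f -> bounded_measurable g ->
  \int[mu \x nu]_z (((f \o fst) \* (g \o snd)) z)%:E =
    \int[mu]_x (f x)%:E * \int[nu]_y (g y)%:E.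
Proof.
move=> bf bg; have bfg : bounded_measurable ((f \o fst) \* (g \o snd))%R.
  by apply: bounded_measurableM; apply: bounded_measurable_comp.
rewrite -integral12_prod_meas1; last exact: bounded_measurable_integrable_prob.
have inner x : \int[nu]_y (((f \o fst) \* (g \o snd)) (x, y))%:E =
    (f x)%:E * \int[nu]_y (g y)%:E.
  by rewrite -integralZl //; exact: bounded_measurable_integrable_prob.
rewrite /fubini_F; under eq_integral do rewrite inner.
rewrite -[\int[nu]_y (g y)%:E]fineK ?bounded_measurable_integral_fin_num //.
rewrite integralZr //.
exact: bounded_measurable_integrable_prob.
Qed.

Lemma mean_mul_indep (U V : T -> R) (f g : R -> R) :
  measurable_fun setT U -> measurable_fun setT V -> indep_pair U V ->
  bounded_measurable f -> bounded_measurable g ->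
  mean P (fun w => f (U w) * g (V w))%R = (mean P (f \o U) * mean P (g \o V))%R.
Proof.
move=> mU mV UV bf bg; have mUV := measurable_fun_pair mU mV.
have bfg : bounded_measurable ((f \o fst) \* (g \o snd))%R.
  by apply: bounded_measurableM; apply: bounded_measurable_comp.
rewrite (mean_comp_law mU bf) (mean_comp_law mV bg).
rewrite -fineM ?bounded_measurable_integral_fin_num // -integral_prod_mul //.
rewrite /mean unlock; congr fine.
rewrite -(integral_distribution (X := mfun_Sub (mem_set mUV))
  (f := EFin \o ((f \o fst) \* (g \o snd))%R)).
- by apply: eq_measure_integral => A mA _; exact: pair_law_indep.
- by case: bfg => mfg _; exact/measurable_EFinP.
exact: (bounded_measurable_integrable_prob P (bounded_measurable_comp bfg mUV)).
Qed.

End laws.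

Section independence.
Context {d : measure_display} {T : measurableType d} {R : realType}.
Variable P : probability T R.
Local Open Scope ereal_scope.

Lemma mutually_independent_comp {I J : eqType} (Y : I -> T -> R) (f : J -> I) (g : I -> J) :
  cancel f g -> mutually_independent P Y -> mutually_independent P (Y \o f).
Proof.
move=> fK iY s B us mB.
have := @iY (map f s) (B \o g); rewrite map_inj_uniq ?big_map; last exact: can_inj fK.
by rewrite /comp; under eq_bigr do rewrite fK; under [in RHS]eq_bigr do rewrite fK; apply.
Qed.

Lemma indep_pair_of_mutual {I : eqType} (Y : I -> T -> R) (i j : I) :
  i != j -> mutually_independent P Y -> indep_pair P (Y i) (Y j).
Proof.
move=> ij iY A B mA mB.
have mAB k : measurable (if k == i then A else B) by case: ifP.
have := @iY [:: i; j] (fun k => if k == i then A else B).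
rewrite /= inE ij => /(_ isT mAB).
by rewrite !big_cons !big_nil setIT mule1 eqxx eq_sym (negbTE ij) => ->.
Qed.

Lemma big_update_notin {I : eqType} {S : Type} (op : S -> S -> S) (x : S)
    (F : I -> set R -> S) (s : seq I) (i : I) (A : set R) (B : I -> set R) :
  i \notin s ->
  \big[op/x]_(j <- s) F j (if j == i then A else B j) = \big[op/x]_(j <- s) F j (B j).
Proof.
move=> si; rewrite big_seq [RHS]big_seq; apply: eq_bigr => j js.
by rewrite ifN //; apply: contraNneq si => <-.
Qed.

Lemma mutually_independent_cons {I : eqType} (Y : I -> T -> R) (i : I) (s : seq I)
    (A : set R) (B : I -> set R) :
  mutually_independent P Y -> i \notin s -> uniq s -> measurable A ->
  (forall j, measurable (B j)) ->
  let F := \big[setI/setT]_(j <- s) (Y j @^-1` B j) in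
  P (Y i @^-1` A `&` F) = P (Y i @^-1` A) * P F.
Proof.
move=> iY si us mA mB F.
have mAB j : measurable (if j == i then A else B j) by case: ifP.
have := iY (i :: s) _ _ mAB; rewrite /= si us => /(_ isT).
rewrite !big_cons eqxx !(big_update_notin _ _ (fun j C => Y j @^-1` C)) //.
by rewrite !(big_update_notin _ _ (fun j C => P (Y j @^-1` C))) // -(iY s B us mB).
Qed.

End independence.

(** * Partial sums of independent sequences *)

Lemma measurable_preimage_binop {R : realType} (op : R -> R -> R) (A : set R) :
  measurable_fun setT (fun z : R * R => op z.1 z.2) -> measurable A ->
  measurable [set z : R * R | A (op z.1 z.2)].
Proof. by move=> mop mA; rewrite -[X in measurable X]setTI; exact: mop. Qed.

Section partial_sums.
Context {d : measure_display} {T : measurableType d} {R : realType}.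
Variable P : probability T R.
Local Open Scope ereal_scope.

Definition psum (X : nat -> T -> R) (n : nat) (w : T) : R := (\sum_(i < n) X i w)%R.

Lemma psum0 X : psum X 0 = cst 0%R.
Proof. by apply/funext => w; rewrite /psum big_ord0. Qed.

Lemma psumS X n : psum X n.+1 = fun w => (psum X n w + X n w)%R.
Proof. by apply/funext => w; rewrite /psum big_ord_recr. Qed.

Lemma measurable_psum X : (forall i, measurable_fun setT (X i)) ->
  forall n, measurable_fun setT (psum X n).
Proof.
move=> mX; elim=> [|n IH]; first by rewrite psum0; exact: measurable_cst.
by rewrite psumS; exact: measurable_funD.
Qed.

Lemma measurable_addr_preimage (A : set R) : measurable A ->
  measurable [set z : R * R | A (z.1 + z.2)%R].
Proof.
apply: measurable_preimage_binop.
by apply: measurable_funD; [exact: measurable_fst | exact: measurable_snd].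
Qed.

Section independent_sequence.
Variable X : nat -> T -> R.
Hypothesis mX : forall i, measurable_fun setT (X i).
Hypothesis iX : mutually_independent P X.

Lemma measurable_bigcap_preimage (s : seq nat) (B : nat -> set R) :
  (forall i, measurable (B i)) -> measurable (\big[setI/setT]_(i <- s) (X i @^-1` B i)).
Proof.
move=> mB; elim: s => [|i s IH]; first by rewrite big_nil.
rewrite big_cons; apply: measurableI => //.
by rewrite -[X in measurable X]setTI; exact: mX.
Qed.

Lemma psum_indep_tail n (A : set R) (s : seq nat) (B : nat -> set R) :
  measurable A -> uniq s -> all (leq n) s -> (forall i, measurable (B i)) ->
  let F := \big[setI/setT]_(i <- s) (X i @^-1` B i) in
  P (psum X n @^-1` A `&` F) = P (psum X n @^-1` A) * P F.
Proof.
elim: n A s B => [|n IH] A s B mA us sn mB F.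
  rewrite psum0; have [A0|nA0] := pselect (A 0%R).
    have -> : (cst 0%R : T -> R) @^-1` A = setT by apply/seteqP; split.
    by rewrite setTI probability_setT mul1e.
  have -> : (cst 0%R : T -> R) @^-1` A = set0 by apply/seteqP; split.
  by rewrite set0I measure0 mul0e.
have mF : measurable F by exact: measurable_bigcap_preimage.
have ns : n \notin s by apply/negP => /(allP sn); rewrite ltnn.
have sn' : all (leq n) s by apply/allP => i /(allP sn) /ltnW.
have Sn_Xn A' B' : measurable A' -> measurable B' ->
    P (psum X n @^-1` A' `&` X n @^-1` B') = P (psum X n @^-1` A') * P (X n @^-1` B').
  move=> mA' mB'; have := IH A' [:: n] (fun=> B') mA' isT _ (fun=> mB').
  by rewrite /= leqnn big_cons big_nil setIT => ->.
(* P (_ `&` F) and P F * P _ agree on the rectangles {S_n in A', X_n in B'},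
   hence on {S_n + X_n in A}. *)
pose PF := NngNum (fine_ge0 (measure_ge0 P F)).
have mscaleE E : mscale PF P E = P F * P E by rewrite /mscale /= fineK ?fin_num_measure.
have rect A' B' : measurable A' -> measurable B' ->
    mrestr P mF (psum X n @^-1` A' `&` X n @^-1` B') =
    mscale PF P (psum X n @^-1` A' `&` X n @^-1` B').
  move=> mA' mB'; rewrite /mrestr mscaleE Sn_Xn // -setIA.
  have mB'B i : measurable (if i == n then B' else B i) by case: ifP.
  have := IH A' (n :: s) _ mA'; rewrite /= ns us sn' leqnn => /(_ _ isT isT mB'B).
  rewrite big_cons eqxx (big_update_notin _ _ (fun i C => X i @^-1` C)) // => ->.
  by rewrite mutually_independent_cons // muleA muleC.
have finF : mrestr P mF setT < +oo.
  by rewrite /mrestr setTI (le_lt_trans (probability_le1 P mF)) ?ltry.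
have := pair_preimage_measure_unique (measurable_psum mX n) (mX n)
  (measurable_psum mX n) (mX n) finF rect (measurable_addr_preimage mA).
by move=> key; rewrite psumS muleC -mscaleE; exact: key.
Qed.

Lemma indep_pair_psum n : indep_pair P (psum X n) (X n).
Proof.
move=> A B mA mB.
have := psum_indep_tail (n := n) (s := [:: n]) (B := fun=> B) mA isT _ (fun=> mB).
by rewrite /= leqnn big_cons big_nil setIT => ->.
Qed.

End independent_sequence.

Lemma psum_same_law (X X' : nat -> T -> R) :
  (forall i, measurable_fun setT (X i)) -> (forall i, measurable_fun setT (X' i)) ->
  mutually_independent P X -> mutually_independent P X' ->
  (forall i, same_law P (X i) (X' i)) -> forall n, same_law P (psum X n) (psum X' n).
Proof.
move=> mX mX' iX iX' XX'; elim=> [|n IH] A mA; first by rewrite !psum0.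
rewrite !psumS; apply: (pair_preimage_measure_unique (m1 := P) (m2 := P)
  (measurable_psum mX n) (mX n) (measurable_psum mX' n) (mX' n)
  (probability_setT_lty P) _ (measurable_addr_preimage mA)).
by move=> A' B' mA' mB' /=; rewrite !indep_pair_psum // IH // XX'.
Qed.

End partial_sums.

(** * Truncated moments *)

Section truncations.
Context {R : realType}.

Definition indic_le (c x : R) : R := if `|x| <= c then 1 else 0.

Let measurable_abs_leb c : measurable_fun setT (fun x : R => `|x| <= c).
Proof. by apply: measurable_fun_ler; [exact: normr_measurable | exact: measurable_cst]. Qed.

Lemma bounded_measurable_indic_le c : bounded_measurable (indic_le c).
Proof.
split; first by apply: measurable_fun_ifT => //; exact: measurable_cst.
by exists 1 => x; rewrite /indic_le; case: ifP; rewrite ?normr1 ?normr0.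
Qed.

Lemma bounded_measurable_trunc c : bounded_measurable (trunc (@idfun R) c).
Proof.
split; first by apply: measurable_fun_ifT => //; exact: measurable_id.
exists `|c| => x; rewrite /trunc; case: ifP => [xc|_]; last by rewrite normr0.
exact: le_trans xc (ler_norm c).
Qed.

Lemma trunc_oddE (c x : R) : trunc (@idfun R) c (- x) = - trunc (@idfun R) c x.
Proof. by rewrite /trunc normrN; case: ifP; rewrite ?oppr0. Qed.

Lemma trunc_subr_sqr_ge (c u v : R) : 0 <= c ->
  trunc idfun c u ^+ 2 * indic_le c v + trunc idfun c v ^+ 2 * indic_le c u
    - 2 * (trunc idfun c u * trunc idfun c v) <= trunc idfun (2 * c) (u - v) ^+ 2.
Proof.
move=> c0; rewrite /trunc /indic_le /=.
set r := (if `|u - v| <= 2 * c then _ else _); have r2 := sqr_ge0 r.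
have [uc|cu] := leP `|u| c; have [vc|cv] := leP `|v| c; try nra.
have uvc : `|u - v| <= 2 * c by have := ler_normB u v; lra.
by rewrite /r uvc; nra.
Qed.

End truncations.

Section truncated_moments.
Context {d : measure_display} {T : measurableType d} {R : realType}.
Variables (P : probability T R) (X : T -> R).
Hypothesis mX : measurable_fun setT X.

Definition mass (c : R) := mean P (indic_le c \o X).
Definition tmean (c : R) := mean P (trunc X c).
Definition tsecond (c : R) := mean P (fun w => trunc X c w ^+ 2).
(* E[(X - t)^2; |X| <= c], written with [trunc] to make it visibly bounded. *)
Definition tquad (c t : R) := mean P (fun w => (trunc X c w - t) ^+ 2 * indic_le c (X w)).

Let bm_indic c : bounded_measurable (indic_le c \o X).
Proof. exact: bounded_measurable_comp (bounded_measurable_indic_le c) mX. Qed.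

Let bm_trunc c : bounded_measurable (trunc X c).
Proof. exact: bounded_measurable_comp (bounded_measurable_trunc c) mX. Qed.

Let bm_trunc2 c : bounded_measurable (fun w => trunc X c w ^+ 2).
Proof. exact: (bounded_measurableM (bm_trunc c) (bm_trunc c)). Qed.

Let bm_trunc_sub2 c t : bounded_measurable (fun w => (trunc X c w - t) ^+ 2).
Proof.
have bmB := bounded_measurableB (bm_trunc c) (bounded_measurable_cst t).
exact: (bounded_measurableM bmB bmB).
Qed.

Let bm_tquad c t : bounded_measurable (fun w => (trunc X c w - t) ^+ 2 * indic_le c (X w)).
Proof. exact: bounded_measurableM (bm_trunc_sub2 c t) (bm_indic c). Qed.

Lemma tquadE c t : tquad c t = mass c * t ^+ 2 - 2 * tmean c * t + tsecond c.
Proof.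
rewrite /tquad (@eq_mean _ _ _ _ _ ((t ^+ 2) \*o (indic_le c \o X) \+
  (- (2 * t)) \*o trunc X c \+ (fun w => trunc X c w ^+ 2))); last first.
  by move=> w; rewrite /indic_le /trunc /=; case: ifP => _; ring.
rewrite !meanD ?meanZ ?mean_cst; first by rewrite /mass /tmean /tsecond; ring.
all: by repeat (apply: bounded_measurableD || apply: bounded_measurableZ).
Qed.

Lemma mean_trunc_sub2 c t :
  mean P (fun w => (trunc X c w - t) ^+ 2) = tsecond c - 2 * t * tmean c + t ^+ 2.
Proof.
rewrite (@eq_mean _ _ _ _ _ ((fun w => trunc X c w ^+ 2) \+
  (- (2 * t)) \*o trunc X c \+ cst (t ^+ 2))); last by move=> w /=; ring.
rewrite !meanD ?meanZ ?mean_cst; first by rewrite /tmean /tsecond; ring.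
all: by repeat (apply: bounded_measurableD || apply: bounded_measurableZ ||
  apply: bounded_measurable_cst).
Qed.

Lemma variance_trunc c : 'V_P[trunc X c]%E = (tsecond c - tmean c ^+ 2)%:E.
Proof. exact: variance_mean. Qed.

Lemma tmean_sqr_le_tsecond c : tmean c ^+ 2 <= tsecond c.
Proof.
have := mean_ge0 P (bm_trunc_sub2 c (tmean c)) (fun w => sqr_ge0 _).
by rewrite mean_trunc_sub2; lra.
Qed.

Lemma tquad_ge0 c t : 0 <= tquad c t.
Proof.
apply: mean_ge0 => // w; apply: mulr_ge0; first exact: sqr_ge0.
by rewrite /indic_le; case: ifP.
Qed.

Lemma tquad_le_mono c c' t : c <= c' -> tquad c t <= tquad c' t.
Proof.
move=> cc'; apply: ler_mean => // w; rewrite /trunc /indic_le.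
case: ifP => [Xc|_]; first by rewrite (le_trans Xc cc') !mulr1.
by rewrite mulr0; case: ifP => _; rewrite ?mulr1 ?mulr0 ?sqr_ge0.
Qed.

Lemma tquad_le_trunc_sub2 c N t : c <= N ->
  tquad c t <= tsecond N - 2 * t * tmean N + t ^+ 2.
Proof.
move=> cN; rewrite -mean_trunc_sub2; apply: ler_mean => // w.
rewrite /trunc /indic_le; case: ifP => [Xc|_]; last by rewrite mulr0 sqr_ge0.
by rewrite (le_trans Xc cN) mulr1.
Qed.

Lemma mass_ge0 c : 0 <= mass c.
Proof. by apply: mean_ge0 => // w; rewrite /indic_le /=; case: ifP. Qed.

Lemma mass_le1 c : mass c <= 1.
Proof.
rewrite -(mean_cst P 1); apply: ler_mean => //; first exact: bounded_measurable_cst.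
by move=> w; rewrite /indic_le /=; case: ifP.
Qed.

Lemma mass_le_mono c c' : c <= c' -> mass c <= mass c'.
Proof.
move=> cc'; apply: ler_mean => // w; rewrite /indic_le /=.
by case: ifP => [Xc|_]; [rewrite (le_trans Xc cc') | case: ifP].
Qed.

Let mnX : measurable_fun setT (fun w => `|X w|).
Proof. exact: measurableT_comp (@normr_measurable R setT) mX. Qed.

Lemma measurable_tail (c : R) : measurable [set w | c < `|X w|].
Proof.
rewrite (_ : [set w | _] = (fun w => `|X w|) @^-1` `]c, +oo[).
  by rewrite -[X in measurable X]setTI; exact: mnX.
by apply/seteqP; split => w /=; rewrite in_itv /= andbT.
Qed.

Lemma measurable_abs_le (c : R) : measurable [set w | `|X w| <= c].
Proof.
rewrite (_ : [set w | _] = (fun w => `|X w|) @^-1` `]-oo, c]).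
  by rewrite -[X in measurable X]setTI; exact: mnX.
by apply/seteqP; split => w /=; rewrite in_itv.
Qed.

Lemma massE c : mass c = fine (P [set w | `|X w| <= c]).
Proof.
rewrite -mean_indic; last exact: measurable_abs_le.
by apply: eq_mean => w; rewrite /indic_le indicE /=; case: ifP => Xc;
  [rewrite mem_set | rewrite memNset //= Xc].
Qed.

Lemma mass_tail c : mass c = 1 - fine (P [set w | c < `|X w|]).
Proof.
rewrite -(mean_cst P 1) -mean_indic; last exact: measurable_tail.
rewrite -meanB; last 2 first.
- exact: bounded_measurable_cst.
- exact/bounded_measurable_indic/measurable_tail.
apply: eq_mean => w /=; rewrite /indic_le indicE.
have [Xc|cX] := leP `|X w| c; first by rewrite memNset ?subr0 //= ltNge Xc.
by rewrite mem_set ?subrr.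
Qed.

Lemma tail_cvg0 : fine (P [set w | N%:R < `|X w|]) @[N --> \oo] --> 0.
Proof.
pose F (n : nat) := [set w | n%:R < `|X w|].
have F0 : \bigcap_n F n = set0.
  apply/seteqP; split => // w FXw.
  have := lt_trans (archi_boundP (normr_ge0 (X w))) (FXw _ I).
  by rewrite ltxx.
have ndF : {homo F : n m / (n <= m)%N >-> (m <= n)%O}.
  move=> n m nm; apply/subsetPset => w; rewrite /F /=; apply: le_lt_trans.
  by rewrite ler_nat.
have mF n : measurable (F n) := measurable_tail n%:R.
have PF0 : (P (F 0%N) < +oo)%E.
  exact: le_lt_trans (probability_le1 P (mF 0%N)) (ltry _).
have := nonincreasing_cvg_mu PF0 mF (bigcapT_measurable mF) ndF.
by rewrite F0 measure0 => /fine_cvgP[].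
Qed.

Lemma mass_sub_le_tquad c c' t : c <= c' -> `|t| + 1 <= c ->
  mass c' - mass c <= tquad c' t.
Proof.
move=> cc' tc; rewrite -meanB //; apply: ler_mean => // [|w /=].
  exact: bounded_measurableB.
rewrite /indic_le /trunc; have [Xc|cX] := leP `|X w| c.
  by rewrite (le_trans Xc cc') subrr mulr1 sqr_ge0.
case: ifP => [Xc'|_]; last by rewrite subrr mulr0.
have Xt1 : 1 <= `|X w - t| by have := ler_normD (X w - t) t; rewrite subrK; lra.
by rewrite subr0 mulr1 -(real_normK (num_real (X w - t))); nra.
Qed.

Lemma mass_cvg1 : mass N%:R @[N --> \oo] --> (1 : R).
Proof.
rewrite (_ : (fun N => _) = fun N : nat => 1 - fine (P [set w | N%:R < `|X w|])).
  by rewrite -[X in _ --> X]subr0; apply: cvgB; [exact: cvg_cst | exact: tail_cvg0].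
by apply/funext => N; exact: mass_tail.
Qed.

Lemma mass_near1 e : 0 < e -> \forall N \near \oo, 1 - e <= mass N%:R.
Proof.
move=> e0; move/cvgrPdist_le : mass_cvg1 => /(_ _ e0); apply: filterS => N.
by rewrite ler_distlC => /andP[].
Qed.

End truncated_moments.

Lemma quad_coercive {R : realFieldType} (a b c : R) : 0 < a -> b ^+ 2 < a * c ->
  exists2 e, 0 < e & forall t, e * (1 + t ^+ 2) <= a * t ^+ 2 - 2 * b * t + c.
Proof.
move=> a0 bac; set m := b / a; set g := c - b ^+ 2 / a.
have g0 : 0 < g by rewrite subr_gt0 ltr_pdivrMr // mulrC.
have quadE t : a * t ^+ 2 - 2 * b * t + c = a * (t - m) ^+ 2 + g.
  by rewrite /m /g; field; rewrite gt_eqF.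
have m0 : 0 < 1 + 2 * m ^+ 2 by rewrite ltr_pwDl // mulr_ge0 // sqr_ge0.
exists (Num.min (a / 2) (g / (1 + 2 * m ^+ 2))).
  by rewrite lt_min !divr_gt0.
move=> t; rewrite quadE; set e := Num.min _ _.
have ea : e <= a / 2 by rewrite ge_min lexx.
have eg : e * (1 + 2 * m ^+ 2) <= g by rewrite -ler_pdivlMr // ge_min lexx orbT.
have e0 : 0 <= e by rewrite le_min !divr_ge0 ?ltW.
have tm : t ^+ 2 <= 2 * (t - m) ^+ 2 + 2 * m ^+ 2 by have := sqr_ge0 (t - 2 * m); nra.
have := ler_wpM2l e0 tm; have := sqr_ge0 (t - m); nra.
Qed.

Section eventual_moment_bound.
Context {d : measure_display} {T : measurableType d} {R : realType}.
Variables (P : probability T R) (X : T -> R).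
Hypothesis mX : measurable_fun setT X.

Local Notation A c := (mass P X c).
Local Notation B c := (tmean P X c).
Local Notation C c := (tsecond P X c).

Lemma trunc_moments_nondegenerate (L : nat) : B L%:R ^+ 2 < A L%:R * C L%:R ->
  \forall N \near \oo, B N%:R ^+ 2 <= (2 * A N%:R - 1) * C N%:R.
Proof.
move=> BAC.
have A0 : 0 < A L%:R.
  rewrite lt_neqAle mass_ge0 // andbT; apply: contraTneq BAC => <-.
  by rewrite mul0r ltNge sqr_ge0.
have [e e0 coer] := quad_coercive A0 BAC.
have p0 : 0 < e / (2 * (1 + e)) by apply: divr_gt0 => //; lra.
near=> N.
have LN : L%:R <= N%:R :> R by rewrite ler_nat; near: N; exact: nbhs_infty_ge.
have var : e * (1 + B N%:R ^+ 2) <= C N%:R - B N%:R ^+ 2.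
  apply: le_trans (coer _) _; rewrite -tquadE //.
  apply: le_trans (tquad_le_trunc_sub2 P mX (B N%:R) LN) _; lra.
have Ae : 1 - e / (2 * (1 + e)) <= A N%:R by near: N; exact: mass_near1.
have A1 : A N%:R <= 1 by exact: mass_le1.
have pe : (1 - A N%:R) * (2 * (1 + e)) <= e by rewrite -ler_pdivlMr; lra.
(* (2A - 1) C - B^2 = (2A - 1) (C - B^2) - 2 (1 - A) B^2 *)
have A2 : 0 <= 2 * A N%:R - 1 by nra.
have := ler_wpM2l A2 var; have := ler_wpM2r (sqr_ge0 (B N%:R)) pe; nra.
Unshelve. all: by end_near.
Qed.
Lemma tquad_vertex c t : 0 < A c ->
  tquad P X c t = A c * (t - B c / A c) ^+ 2 + (C c - B c ^+ 2 / A c).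
Proof. by move=> A0; rewrite tquadE //; field; rewrite gt_eqF. Qed.

Lemma tquad_common_root : (forall L : nat, A L%:R * C L%:R <= B L%:R ^+ 2) ->
  exists M m, forall L : nat, (M <= L)%N -> tquad P X L%:R m <= 0.
Proof.
move=> degen.
have [M _ AM] : \forall M \near \oo, 2^-1 <= A M%:R.
  have := mass_near1 P mX (e := 2^-1); rewrite invr_gt0 ltr0n => /(_ isT).
  by apply: filterS => M; lra.
have AM0 : 0 < A M%:R by apply: lt_le_trans (AM M (leqnn M)); rewrite invr_gt0.
set m := B M%:R / A M%:R.
have gap_le0 L : 0 < A L%:R -> C L%:R - B L%:R ^+ 2 / A L%:R <= 0.
  by move=> AL0; rewrite subr_le0 ler_pdivlMr // mulrC degen.
have tquadM t : tquad P X M%:R t = A M%:R * (t - m) ^+ 2.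
  rewrite tquad_vertex //; suff -> : C M%:R - B M%:R ^+ 2 / A M%:R = 0 by rewrite addr0.
  apply/eqP; rewrite eq_le gap_le0 //=.
  by have := tquad_ge0 P mX M%:R m; rewrite tquad_vertex // subrr expr0n mulr0 add0r.
(* Q_M vanishes only at m and Q_M <= Q_L, so m is also the vertex of Q_L. *)
have tquad_m L : (M <= L)%N -> tquad P X L%:R m <= 0.
  move=> ML; have MLR : M%:R <= L%:R :> R by rewrite ler_nat.
  have AL0 : 0 < A L%:R by apply: lt_le_trans AM0 (mass_le_mono P mX MLR).
  have QL0 : tquad P X L%:R (B L%:R / A L%:R) <= 0.
    by rewrite tquad_vertex // subrr expr0n mulr0 add0r gap_le0.
  have := le_trans (tquad_le_mono P mX _ MLR) QL0; rewrite tquadM.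
  rewrite pmulr_rle0 // => sq0.
  suff <- : B L%:R / A L%:R = m by [].
  by apply/eqP; rewrite -subr_eq0 -sqrf_eq0 eq_le sq0 sqr_ge0.
by exists M, m.
Qed.

Lemma trunc_moments_degenerate :
  (forall L : nat, A L%:R * C L%:R <= B L%:R ^+ 2) -> \forall N \near \oo, A N%:R = 1.
Proof.
move=> /tquad_common_root[M [m tquad_m]].
(* For |m| + 1 <= N <= L, mass_sub_le_tquad gives A_L - A_N <= Q_L(m) <= 0. *)
near=> N; apply/eqP; rewrite eq_le mass_le1 //=; apply/ler_addgt0Pr => e e0.
have [L0 _ AL0] := mass_near1 P mX e0.
set L := maxn N L0.
have NL : N%:R <= L%:R :> R by rewrite ler_nat leq_maxl.
have mN : `|m| + 1 <= N%:R by near: N; exact: nbhs_infty_ger.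
have MN : (M <= N)%N by near: N; exact: nbhs_infty_ge.
have := mass_sub_le_tquad P mX NL mN.
have := tquad_m L (leq_trans MN (leq_maxl N L0)).
have := AL0 L (leq_maxr N L0).
lra.
Unshelve. all: by end_near.
Qed.

Lemma trunc_moments_eventually :
  \forall N \near \oo, B N%:R ^+ 2 <= (2 * A N%:R - 1) * C N%:R.
Proof.
have [[L BAC]|nondeg] := pselect (exists L : nat, B L%:R ^+ 2 < A L%:R * C L%:R).
  exact: trunc_moments_nondegenerate BAC.
have degen L : A L%:R * C L%:R <= B L%:R ^+ 2.
  by rewrite leNgt; apply/negP => BAC; apply: nondeg; exists L.
apply: filterS (trunc_moments_degenerate degen) => N ->.
by rewrite mulr1 -addrA subrr addr0 mul1r tmean_sqr_le_tsecond.
Qed.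

End eventual_moment_bound.

(** * Symmetrization *)

Lemma same_law_subr_swap {d : measure_display} {T : measurableType d} {R : realType}
    (P : probability T R) (U V : T -> R) :
  measurable_fun setT U -> measurable_fun setT V -> indep_pair P U V ->
  same_law P U V -> same_law P (fun w => U w - V w) (fun w => V w - U w).
Proof.
move=> mU mV UV lUV A mA.
have msub : measurable_fun setT (fun z : R * R => z.1 - z.2).
  by apply: measurable_funB; [exact: measurable_fst | exact: measurable_snd].
apply: (pair_preimage_measure_unique (m1 := P) (m2 := P) mU mV mV mU
  (probability_setT_lty P) _ (measurable_preimage_binop (op := fun x y => x - y) msub mA)).
move=> A' B' mA' mB' /=.
by rewrite UV // (indep_pairC UV) // -!lUV // muleC.
Qed.

Lemma mean_trunc_subr_sym {d : measure_display} {T : measurableType d} {R : realType}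
    (P : probability T R) (U V : T -> R) (c : R) :
  measurable_fun setT U -> measurable_fun setT V -> indep_pair P U V ->
  same_law P U V -> mean P (trunc (fun w => U w - V w) c) = 0.
Proof.
move=> mU mV UV lUV.
have mUV : measurable_fun setT (fun w => U w - V w) by exact: measurable_funB.
have mVU : measurable_fun setT (fun w => V w - U w) by exact: measurable_funB.
have := mean_comp_same_law mUV mVU (same_law_subr_swap mU mV UV lUV)
  (bounded_measurable_trunc c).
rewrite (_ : _ \o (fun w => V w - U w) = \- trunc (fun w => U w - V w) c); last first.
  by apply/funext => w /=; rewrite -opprB trunc_oddE.
rewrite meanN; last exact: bounded_measurable_comp (bounded_measurable_trunc c) mUV.
by move=> h; lra.
Qed.

Section symmetrization.
Context {d : measure_display} {T : measurableType d} {R : realType}.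
Variables (P : probability T R) (X U V : T -> R).
Hypotheses (mX : measurable_fun setT X) (mU : measurable_fun setT U)
  (mV : measurable_fun setT V).
Hypotheses (UV : indep_pair P U V) (UX : same_law P U X) (VX : same_law P V X).

Local Notation D := (fun w => U w - V w).

Let mD : measurable_fun setT D. Proof. exact: measurable_funB. Qed.

Let bm_trunc2D c : bounded_measurable (fun w => trunc D c w ^+ 2).
Proof.
have bt := bounded_measurable_comp (bounded_measurable_trunc c) mD.
exact: (bounded_measurableM bt bt).
Qed.

Lemma tmean_sym c : tmean P D c = 0.
Proof.
apply: mean_trunc_subr_sym => // A mA.
by rewrite UX // VX.
Qed.

Lemma tsecond_sym_ge c : 0 <= c ->
  2 * (mass P X c * tsecond P X c - tmean P X c ^+ 2) <= tsecond P D (2 * c).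
Proof.
move=> c0.
pose sq (x : R) := trunc idfun c x ^+ 2.
have bsq : bounded_measurable sq.
  exact: bounded_measurableM (bounded_measurable_trunc c) (bounded_measurable_trunc c).
have bind := bounded_measurable_indic_le c.
have btr := bounded_measurable_trunc c.
have lawU (f : R -> R) : bounded_measurable f -> mean P (f \o U) = mean P (f \o X).
  by move=> bf; exact: mean_comp_same_law.
have lawV (f : R -> R) : bounded_measurable f -> mean P (f \o V) = mean P (f \o X).
  by move=> bf; exact: mean_comp_same_law.
have bmul (f g : R -> R) (W1 W2 : T -> R) : bounded_measurable f -> bounded_measurable g ->
    measurable_fun setT W1 -> measurable_fun setT W2 ->
    bounded_measurable (fun w => f (W1 w) * g (W2 w)).
  by move=> bf bg mW1 mW2; apply: bounded_measurableM; exact: bounded_measurable_comp.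
have meanUV (f g : R -> R) : bounded_measurable f -> bounded_measurable g ->
    mean P (fun w => f (U w) * g (V w)) = mean P (f \o X) * mean P (g \o X).
  by move=> bf bg; rewrite mean_mul_indep // lawU // lawV.
have meanVU (f g : R -> R) : bounded_measurable f -> bounded_measurable g ->
    mean P (fun w => f (V w) * g (U w)) = mean P (f \o X) * mean P (g \o X).
  by move=> bf bg; rewrite mean_mul_indep ?lawU ?lawV //; exact: indep_pairC.
pose G := (fun w => sq (U w) * indic_le c (V w)) \+ (fun w => sq (V w) * indic_le c (U w))
  \- 2 \*o (fun w => trunc idfun c (U w) * trunc idfun c (V w)).
have meanG : mean P G = 2 * (mass P X c * tsecond P X c - tmean P X c ^+ 2).
  rewrite meanB ?meanD ?meanZ ?meanUV ?meanVU //; try exact: bmul.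
  - by rewrite /mass /tmean /tsecond; ring.
  - by apply: bounded_measurableD; exact: bmul.
  - by apply: bounded_measurableZ; exact: bmul.
have GD w : G w <= trunc D (2 * c) w ^+ 2 by exact: trunc_subr_sqr_ge.
rewrite -meanG; apply: ler_mean GD.
- by apply: bounded_measurableB;
    [apply: bounded_measurableD | apply: bounded_measurableZ]; exact: bmul.
- exact: bm_trunc2D.
Qed.

Lemma tail_le_sym : \forall N \near \oo,
  fine (P [set w | N%:R < `|X w|]) <= 2 * fine (P [set w | 2^-1 * N%:R < `|U w - V w|]).
Proof.
have h2 : 0 < 2^-1 :> R by rewrite invr_gt0.
have [M _ AM] := mass_near1 P mV h2.
have AM2 : 2^-1 <= fine (P [set w | `|V w| <= M%:R]).
  by rewrite -massE //; have := AM M (leqnn M); lra.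
near=> N.
have MN : 2 * M%:R <= N%:R :> R by rewrite -natrM ler_nat; near: N; exact: nbhs_infty_ge.
have mabs_gt (c : R) : measurable [set x : R | c < `|x|].
  exact: measurable_tail (@measurable_id _ R setT) c.
have mabs_le (c : R) : measurable [set x : R | `|x| <= c].
  exact: measurable_abs_le (@measurable_id _ R setT) c.
set S := [set w | N%:R < `|U w|] `&` [set w | `|V w| <= M%:R].
have PS : P S = (P [set w | (N%:R < `|X w|)%R] * P [set w | (`|V w| <= M%:R)%R])%E.
  rewrite -[[set w | (N%:R < `|X w|)%R]]/(X @^-1` [set x | N%:R < `|x|]) -UX //.
  exact: (UV (mabs_gt _) (mabs_le _)).
have subS : S `<=` [set w | 2^-1 * N%:R < `|U w - V w|].
  move=> w [/= NU VM]; have := ler_normD (U w - V w) (V w); rewrite subrK; lra.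
have mtX := measurable_tail mX N%:R; have mVM := measurable_abs_le mV M%:R.
have mtD := measurable_tail (measurable_funB mU mV) (2^-1 * N%:R).
have mS : measurable S by apply: measurableI => //; exact: measurable_tail.
have : fine (P S) <= fine (P [set w | 2^-1 * N%:R < `|U w - V w|]).
  by apply: fine_le; rewrite ?fin_num_measure //; apply: le_measure; rewrite ?inE.
rewrite PS fineM ?fin_num_measure //.
have := fine_ge0 (measure_ge0 P [set w | N%:R < `|X w|]); nra.
Unshelve. all: by end_near.
Qed.

Lemma v_N_sym_le : \forall N \near \oo,
  (v_N P (fun=> X) N 1 <= 2%:E * v_N P (fun=> D) (2 * N) 1)%E.
Proof.
near=> N; rewrite /v_N !mul1r !variance_trunc // tmean_sym expr0n subr0 /=.
rewrite -!EFinM lee_fin natrM invfM mulrA mulrA divff ?mul1r ?pnatr_eq0 //.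
apply: ler_wpM2l; first by rewrite invr_ge0.
have := tsecond_sym_ge (ler0n _ N).
have : tmean P X N%:R ^+ 2 <= (2 * mass P X N%:R - 1) * tsecond P X N%:R.
  by near: N; exact: trunc_moments_eventually.
nra.
Unshelve. all: by end_near.
Qed.

Lemma v_N_sym_sigma_N N eps : v_N P (fun=> D) N eps = sigma_N P (fun=> D) N eps.
Proof.
rewrite /v_N /sigma_N variance_trunc // tmean_sym expr0n subr0 /= -meanE //.
congr (_ * _)%E; congr expectation.
by apply/funext => w; rewrite /trunc; case: ifP => _ //; rewrite expr2 mulr0.
Qed.

Lemma tau_N_sym_le : \forall N \near \oo,
  (tau_N P (fun=> X) N 1 <= 4%:E * tau_N P (fun=> D) N (1 / 2))%E.
Proof.
near=> N; rewrite /tau_N mul1r div1r.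
have mtX := measurable_tail mX N%:R.
have mtD := measurable_tail mD (2^-1 * N%:R).
rewrite -(fineK (fin_num_measure P _ mtX)) -(fineK (fin_num_measure P _ mtD)).
rewrite -!EFinM lee_fin.
have N0 : 0 <= N%:R :> R by [].
have : fine (P [set w | N%:R < `|X w|]) <= 2 * fine (P [set w | 2^-1 * N%:R < `|D w|]).
  by near: N; exact: tail_le_sym.
have := fine_ge0 (measure_ge0 P [set w | 2^-1 * N%:R < `|D w|]); nra.
Unshelve. all: by end_near.
Qed.

End symmetrization.

Lemma psum_sym_dev_le {d : measure_display} {T : measurableType d} {R : realType}
    (P : probability T R) (h hp hm : nat -> T -> R) (N : nat) (eps a : R) :
  (forall i, measurable_fun setT (h i)) -> (forall i, measurable_fun setT (hp i)) ->
  (forall i, measurable_fun setT (hm i)) ->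
  mutually_independent P h -> mutually_independent P hp -> mutually_independent P hm ->
  (forall i, same_law P (hp i) (h i)) -> (forall i, same_law P (hm i) (h i)) ->
  (P [set w | (2 * eps < `|N%:R^-1 * psum (fun n w => hp n w - hm n w) N w|)%R]
    <= 2%:E * P [set w | (eps < `|N%:R^-1 * psum h N w - a|)%R])%E.
Proof.
move=> mh mhp mhm ih ihp ihm lp lm.
set C := [set s : R | eps < `|N%:R^-1 * s - a|].
have mdev (X : nat -> T -> R) (b e : R) : (forall i, measurable_fun setT (X i)) ->
    measurable [set w | e < `|N%:R^-1 * psum X N w - b|].
  move=> mX; apply: (measurable_tail (X := fun w => N%:R^-1 * psum X N w - b)).
  apply: measurable_funB; last exact: measurable_cst.
  by apply: measurable_funM; [exact: measurable_cst | exact: measurable_psum].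
have mC : measurable C.
  apply: (measurable_tail (X := fun s : R => N%:R^-1 * s - a)).
  apply: measurable_funB; last exact: measurable_cst.
  by apply: measurable_funM; [exact: measurable_cst | exact: measurable_id].
have msym : measurable [set w | 2 * eps < `|N%:R^-1 * psum (fun n w => hp n w - hm n w) N w|].
  rewrite (_ : [set w | _] =
      [set w | 2 * eps < `|N%:R^-1 * psum (fun n w => hp n w - hm n w) N w - 0|]).
    by apply: mdev => i; exact: measurable_funB.
  by apply/seteqP; split => w; rewrite /= subr0.
have sub : [set w | 2 * eps < `|N%:R^-1 * psum (fun n w => hp n w - hm n w) N w|] `<=`
    psum hp N @^-1` C `|` psum hm N @^-1` C.
  move=> w /=; rewrite /psum sumrB mulrBr.
  set x := N%:R^-1 * _; set y := N%:R^-1 * _ => hxy.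
  have [xa|ax] := ltP eps `|x - a|; first by left.
  have [ya|ay] := ltP eps `|y - a|; first by right.
  by have := ler_normB (x - a) (y - a); rewrite opprB addrA subrK; lra.
have mSp := mdev hp a eps mhp; have mSm := mdev hm a eps mhm.
apply: le_trans (le_measure P (mem_set msym) (mem_set (measurableU _ _ mSp mSm)) sub) _.
apply: le_trans (measureU2 P mSp mSm) _.
rewrite /= (psum_same_law mhp mh ihp ih lp N mC) (psum_same_law mhm mh ihm ih lm N mC).
by rewrite mule_natl mule2n.
Qed.

Lemma pi_N_sym_le {d : measure_display} {T : measurableType d} {R : realType}
    (P : probability T R) (h hp hm : nat -> T -> R) (N : nat) :
  (forall i, measurable_fun setT (h i)) -> (forall i, measurable_fun setT (hp i)) ->
  (forall i, measurable_fun setT (hm i)) ->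
  mutually_independent P h -> mutually_independent P hp -> mutually_independent P hm ->
  (forall i, same_law P (hp i) (h i)) -> (forall i, same_law P (hm i) (h i)) ->
  d_N P (fun n w => hp n w - hm n w) N = 0 ->
  (2^-1%:E * pi_N P (fun n w => hp n w - hm n w)%R N 2 <= pi_N P h N 1)%E.
Proof.
move=> mh mhp mhm ih ihp ihm lp lm dsym; rewrite lee_pdivrMl // /pi_N dsym.
rewrite (_ : [set w | _] =
    [set w | 2 * 1 < `|N%:R^-1 * psum (fun n w => hp n w - hm n w) N w|]).
  exact: psum_sym_dev_le.
by apply/seteqP; split => w; rewrite /= subr0 mulr1.
Qed.

Unset Implicit Arguments. Set Strict Implicit. Set Printing Implicit Defensive.

Theorem lemma8p4 (d : measure_display) (T : measurableType d) (R : realType)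
  (P : probability T R) (h hp hm : nat -> T -> R) :
  iid P h ->
  (* (h^+_n)_n and (h^-_n)_n: independent copies of (h_n)_n *)
  iid P (fun ib : bool * nat => if ib.1 then hp ib.2 else hm ib.2) ->
  same_law P (hp 0%N) (h 0%N) ->
  let hsym := fun n w => hp n w - hm n w in
  exists N0 : nat, forall N : nat, (N0 <= N)%N ->
    [/\ (v_N P h N 1 <= 2%:E * v_N P hsym (2 * N) 1)%E,
        v_N P hsym (2 * N) 1 = sigma_N P hsym (2 * N) 1,
        (tau_N P h N 1 <= 4%:E * tau_N P hsym N (1 / 2))%E &
        (pi_N P h N 1 >= 2^-1%:E * pi_N P hsym N 2)%E].
Proof.
move=> [mh [ih lh]] [mY [iY lY]] lp0 hsym.
have mhp i : measurable_fun setT (hp i) := mY (true, i).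
have mhm i : measurable_fun setT (hm i) := mY (false, i).
have ihp : mutually_independent P hp :=
  mutually_independent_comp (f := pair true) (g := snd) (fun=> erefl) iY.
have ihm : mutually_independent P hm :=
  mutually_independent_comp (f := pair false) (g := snd) (fun=> erefl) iY.
have ind0 : indep_pair P (hp 0%N) (hm 0%N) :=
  indep_pair_of_mutual (i := (true, 0%N)) (j := (false, 0%N)) isT iY.
have lp i : same_law P (hp i) (h i).
  by move=> B mB; rewrite (lY (true, i) (true, 0%N)) // lp0 // (lh 0%N i).
have lm i : same_law P (hm i) (h i).
  by move=> B mB; rewrite (lY (false, i) (true, 0%N)) // lp0 // (lh 0%N i).
have [Nv _ Hv] := v_N_sym_le (mh 0%N) (mhp 0%N) (mhm 0%N) ind0 (lp 0%N) (lm 0%N).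
have [Nt _ Ht] := tau_N_sym_le (mh 0%N) (mhp 0%N) (mhm 0%N) ind0 (lp 0%N).
exists (maxn Nv Nt) => N; rewrite geq_max => /andP[NvN NtN]; split.
- exact: Hv.
- exact: v_N_sym_sigma_N ind0 (lp 0%N) (lm 0%N) _ _.
- exact: Ht.
- apply: pi_N_sym_le => //.
  exact: tmean_sym (mhp 0%N) (mhm 0%N) ind0 (lp 0%N) (lm 0%N) _.
Qed.
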